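(* Let $d,m\in\mathbb{Z}^+$, $n\in\mathbb{N}$, $r\in\mathbb{Z}$, and let $f$ be any function from $\mathbb{Z}$ to $\mathbb{C}$. Then $$\sum_{k\equiv r\ (\mathrm{mod}\ d)}\binom nk(-1)^kf\Big(\Big\lfloor\frac{k-r}m\Big\rfloor\Big)=\sum_{j=0}^{n}\binom nj\Bigg(\sum_{i\equiv r\ (\mathrm{mod}\ d)}\binom ji(-1)^i\Bigg)\sum_{i=0}^{m-1}\sigma_{ij},$$ where $$\sigma_{ij}=\sum_{k\equiv r+i-j\ (\mathrm{mod}\ m)}\binom{n-j}k(-1)^kf\Big(\frac{k-(r+i-j)}m\Big).$$
   Context: All sums over residue classes run over all integers in the class, with $\binom Nk=0$ unless $0\le k\le N$. *)

From HB Require Import structures.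
From mathcomp Require Import all_boot all_order all_algebra.
Set Implicit Arguments. Unset Strict Implicit. Unset Printing Implicit Defensive.
Import Order.TTheory GRing.Theory Num.Theory.
Local Open Scope ring_scope.

(* Residue-class sums over ALL integers k with binomial weight 'C(N,k),
   where 'C(N,k) = 0 unless 0 <= k <= N: only k = 0..N contribute, so the sum
   over the class is literally the finite sum below. *)

Definition sigma (C : numClosedFieldType) (n m : nat) (r : int)
    (f : int -> C) (i j : nat) : C :=
  \sum_(0 <= k < (n - j).+1 |
        ((k%:Z) == r + i%:Z - j%:Z %[mod m%:Z])%Z)
    'C(n - j, k)%:R * (-1) ^+ k * f ((k%:Z - (r + i%:Z - j%:Z)) %/ m%:Z)%Z.

(* With g l := f ((l - r) div m) and a i := (-1)^i [i = r mod d], the inner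
   sums over i are the binomial transform A j = sum_i C(j, i) a i of a.
   Exactly one residue i < m matches k + j - r modulo m, so summing sigma_ij
   over i gives sum_k C(n-j, k) (-1)^k g (k + j).  Regrouping by l = j + k and
   using C(n, j) C(n-j, l-j) = C(n, l) C(l, j), the right-hand side becomes
   sum_l C(n, l) g l sum_j C(l, j) (-1)^(l-j) A j, and binomial inversion
   turns the inner sum back into a l. *)

From HB Require Import structures.
From mathcomp Require Import all_boot all_order all_algebra.
From mathcomp Require Import ring zify.
Set Implicit Arguments.
Unset Strict Implicit.
Unset Printing Implicit Defensive.
Import Order.TTheory GRing.Theory Num.Theory.
Local Open Scope ring_scope.

Lemma mul_bin_trinomial n j l : (j <= l)%N -> (l <= n)%N ->
  ('C(n, j) * 'C(n - j, l - j) = 'C(n, l) * 'C(l, j))%N.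
Proof.
move=> le_jl le_ln; have le_jn := leq_trans le_jl le_ln.
have facts_gt0 : (0 < j`! * (l - j)`! * (n - l)`!)%N by rewrite !muln_gt0 !fact_gt0.
apply/eqP; rewrite -(eqn_pmul2r facts_gt0); apply/eqP.
have sub_sub : (n - j - (l - j) = n - l)%N by rewrite subnBA // subnK.
have fact_nj := bin_fact (leq_sub2r j le_ln); rewrite sub_sub in fact_nj.
transitivity n`!.
  by rewrite -(bin_fact le_jn) -fact_nj; ring.
by rewrite -(bin_fact le_ln) -(bin_fact le_jl); ring.
Qed.

Lemma sum_nat_triangle (V : nmodType) N (F : nat -> nat -> V) :
  \sum_(0 <= j < N.+1) \sum_(0 <= k < (N - j).+1) F j k
  = \sum_(0 <= l < N.+1) \sum_(0 <= j < l.+1) F j (l - j)%N.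
Proof.
elim: N F => [|N IHN] F; first by rewrite !big_nat1.
rewrite big_nat_recl // subn0.
under eq_bigr do rewrite subSS.
rewrite (IHN (fun j k => F j.+1 k)) [in RHS]big_nat_recl // big_nat1.
under [in RHS]eq_bigr do rewrite big_nat_recl // subn0.
by rewrite big_split /= addrA -big_nat_recl.
Qed.

Section BinomialInversion.

Variable R : comPzRingType.

Lemma sum_bin_sign N :
  \sum_(0 <= j < N.+1) 'C(N, j)%:R * (-1) ^+ (N - j) = (N == 0%N)%:R :> R.
Proof.
have := exprDn (-1 : R) 1 N; rewrite addNr expr0n => ->.
by rewrite big_mkord; apply: eq_bigr => j _; rewrite expr1n mulr1 mulr_natl.
Qed.

Lemma sum_bin_bin_sign l i : (i <= l)%N ->
  \sum_(0 <= j < l.+1) 'C(l, j)%:R * 'C(j, i)%:R * (-1) ^+ (l - j) = (i == l)%:R :> R.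
Proof.
move=> le_il.
rewrite (big_cat_nat (n := i)) //= 1?big1_seq ?add0r; first last.
- by rewrite ltnW.
- move=> j /andP[_]; rewrite mem_index_iota => /andP[_ lt_ji].
  by rewrite (bin_small lt_ji) mulr0 mul0r.
rewrite -{1}(add0n i) big_addn subSn //.
under eq_big_nat => k /andP[_ lt_k].
  have le_kil : (k + i <= l)%N by lia.
  rewrite -natrM -(mul_bin_trinomial (leq_addl k i) le_kil) addnK natrM.
  rewrite subnDA subnAC -mulrA.
  over.
rewrite -big_distrr /= sum_bin_sign subn_eq0 eqn_leq le_il /=.
case: leqP => [le_li | _]; last by rewrite mulr0.
by rewrite (@anti_leq l i) ?le_li ?le_il // binn mulr1.
Qed.

Lemma binomial_inversion (a : nat -> R) l :
  \sum_(0 <= j < l.+1) 'C(l, j)%:R * (-1) ^+ (l - j)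
    * \sum_(0 <= i < j.+1) 'C(j, i)%:R * a i = a l.
Proof.
have widen j : (j <= l)%N ->
    \sum_(0 <= i < j.+1) 'C(j, i)%:R * a i = \sum_(0 <= i < l.+1) 'C(j, i)%:R * a i.
  move=> le_jl; rewrite [RHS](big_cat_nat (n := j.+1)) //= [X in _ + X]big1_seq ?addr0 //.
  move=> i /andP[_]; rewrite mem_index_iota => /andP[lt_ji _].
  by rewrite bin_small // mul0r.
under eq_big_nat => j /andP[_ lt_jl].
  rewrite widen // big_distrr /=.
  over.
rewrite exchange_big_nat /=.
under eq_big_nat => i /andP[_ lt_il].
  under eq_bigr do rewrite mulrA [_ * _ * 'C(_, i)%:R]mulrAC.
  rewrite -big_distrl /= sum_bin_bin_sign //.
  over.
under eq_bigr do rewrite mulr_natl mulrb.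
by rewrite -big_mkcond big_nat1_eq ltnSn.
Qed.

Lemma sum_binomial_transform_mul_sign n (a g : nat -> R) :
  \sum_(0 <= j < n.+1) 'C(n, j)%:R * (\sum_(0 <= i < j.+1) 'C(j, i)%:R * a i)
      * (\sum_(0 <= k < (n - j).+1) 'C(n - j, k)%:R * (-1) ^+ k * g (k + j)%N)
  = \sum_(0 <= l < n.+1) 'C(n, l)%:R * a l * g l.
Proof.
under eq_bigr do rewrite big_distrr /=.
rewrite sum_nat_triangle; apply: eq_big_nat => l /andP[_]; rewrite ltnS => le_ln.
rewrite -[in RHS](binomial_inversion a l) big_distrr big_distrl /=.
apply: eq_big_nat => j /andP[_]; rewrite ltnS => le_jl; rewrite subnK //.
set A := \sum_(0 <= i < j.+1) _.
have revision := mul_bin_trinomial le_jl le_ln.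
transitivity (('C(n, j) * 'C(n - j, l - j))%N%:R * ((-1) ^+ (l - j) * A * g l) : R).
  by rewrite natrM; ring.
by rewrite revision natrM; ring.
Qed.

End BinomialInversion.

Lemma sum_residues_mod (V : nmodType) m (x : int) (F : int -> V) : (0 < m)%N ->
  \sum_(0 <= i < m | (x == i%:Z %[mod m%:Z])%Z) F ((x - i%:Z) %/ m%:Z)%Z
  = F (x %/ m%:Z)%Z.
Proof.
move=> m_gt0; have m_neq0 : m%:Z != 0 by rewrite eqz_nat -lt0n.
pose i0 := `|(x %% m%:Z)%Z|%N.
have x_mod : (x %% m%:Z)%Z = i0%:Z by rewrite gez0_abs // modz_ge0.
have lt_i0m : (i0 < m)%N by rewrite -ltz_nat -x_mod ltz_pmod.
rewrite big_nat_cond (eq_bigl (fun i => (0 <= i < m)%N && (i == i0))); last first.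
  move=> i; case: (ltnP i m) => //= lt_im.
  by rewrite x_mod modz_small ?ltz_nat // eqz_nat eq_sym.
rewrite -big_nat_cond big_nat1_eq lt_i0m -x_mod.
by rewrite {1}(divz_eq x m%:Z) addrK mulzK.
Qed.

Lemma sum_sigma (C : numClosedFieldType) n m r (f : int -> C) j : (0 < m)%N ->
  \sum_(0 <= i < m) sigma n m r f i j
  = \sum_(0 <= k < (n - j).+1)
      'C(n - j, k)%:R * (-1) ^+ k * f (((k + j)%N%:Z - r) %/ m%:Z)%Z.
Proof.
move=> m_gt0; rewrite /sigma (exchange_big_dep_nat predT) //=.
apply: eq_bigr => k _; rewrite -big_distrr /=; congr (_ * _).
have shift i : k%:Z - (r + i%:Z - j%:Z) = (k + j)%N%:Z - r - i%:Z.
  by rewrite PoszD; ring.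
under eq_bigl do rewrite eqz_mod_dvd shift -eqz_mod_dvd.
under eq_bigr do rewrite shift.
exact: sum_residues_mod.
Qed.

Theorem lemma2p3 (C : numClosedFieldType) (d m n : nat) (r : int)
    (f : int -> C) (hd : (0 < d)%N) (hm : (0 < m)%N) :
  \sum_(0 <= k < n.+1 | ((k%:Z) == r %[mod d%:Z])%Z)
      'C(n, k)%:R * (-1) ^+ k * f ((k%:Z - r) %/ m%:Z)%Z
  = \sum_(0 <= j < n.+1)
      'C(n, j)%:R
      * (\sum_(0 <= i < j.+1 | ((i%:Z) == r %[mod d%:Z])%Z) 'C(j, i)%:R * (-1) ^+ i)
      * (\sum_(0 <= i < m) sigma n m r f i j).
Proof.
(* The identity holds for every modulus d, d = 0 included, so [hd] is unused. *)
pose a i : C := if (i%:Z == r %[mod d%:Z])%Z then (-1) ^+ i else 0.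
have restrict_class N (F : nat -> C) : \sum_(0 <= i < N | (i%:Z == r %[mod d%:Z])%Z)
    F i * (-1) ^+ i = \sum_(0 <= i < N) F i * a i.
  by rewrite big_mkcond; apply: eq_bigr => i _; rewrite /a; case: ifP; rewrite ?mulr0.
under [RHS]eq_bigr => j _ do rewrite sum_sigma // restrict_class.
rewrite (sum_binomial_transform_mul_sign n a (fun l => f ((l%:Z - r) %/ m%:Z)%Z)).
by rewrite big_mkcond; apply: eq_bigr => k _; rewrite /a; case: ifP; rewrite ?mulr0 ?mul0r.
Qed.
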